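(* Let $\mathbf{V}$ be a variety of interior algebras such that the restriction of $\mathcal{O}$ to $\mathbf{V}$ is a full functor, and let $B$ be projective in $\mathbf{V}$. Then $\mathcal{O}(B)$ is projective in $\gamma(\mathbf{V})$.
   Context: An interior algebra $\langle B,g\rangle$ is a Boolean algebra with an operator $g$ satisfying $g(1)=1$, $g(xy)=g(x)g(y)$, $g(x)\le x$, $gg(x)=g(x)$; $a$ is open if $g(a)=a$. $\mathcal{O}(B)=B^\circ$ is the Heyting algebra of open elements with $a\Rightarrow b=g(-a+b)$; $\mathcal{O}(h)$ is the restriction of a homomorphism $h$ to open elements. $\gamma(\mathbf{V})=\{\mathcal{O}(A):A\in\mathbf{V}\}$. $\mathcal{O}$ restricted to $\mathbf{V}$ is full if for all $A,B\in\mathbf{V}$ every Heyting homomorphism $\mathcal{O}(A)\to\mathcal{O}(B)$ is $\mathcal{O}(h)$ for some homomorphism $h\colon A\to B$. *)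

(* Boolean algebras are MathComp's complemented distributive
   lattices (ctbDistrLatticeType). *)
From HB Require Import structures.
From mathcomp Require Import all_boot all_order.
Set Implicit Arguments. Unset Strict Implicit. Unset Printing Implicit Defensive.
Import Order.Theory.
Local Open Scope order_scope.

Record interior_algebra := IAlg {
  ia_disp : Order.disp_t;
  ia_car :> ctbDistrLatticeType ia_disp;
  ia_g : ia_car -> ia_car;
  ia_g1 : ia_g \top = \top;
  ia_gM : forall x y, ia_g (x `&` y) = ia_g x `&` ia_g y;
  ia_gle : forall x, ia_g x <= x;
  ia_gg : forall x, ia_g (ia_g x) = ia_g x }.

Arguments ia_g {_}.

Definition ia_hom (A B : interior_algebra) (h : A -> B) : Prop :=
  [/\ forall x y, h (x `&` y) = h x `&` h y,
      forall x y, h (x `|` y) = h x `|` h y,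
      forall x, h (~` x) = ~` h x,
      h \bot = \bot /\ h \top = \top &
      forall x, h (ia_g x) = ia_g (h x)].

Definition surjective (X Y : Type) (f : X -> Y) : Prop := forall y, exists x, f x = y.

(** Terms and equations in the language of interior algebras; a variety is
    an equational class (Birkhoff), given by a set E of equations. *)
Inductive term : Type :=
  | TVar of nat
  | TMeet of term & term
  | TJoin of term & term
  | TCompl of term
  | TBot | TTop
  | TInt of term.

Fixpoint eval (A : interior_algebra) (v : nat -> A) (t : term) : A :=
  match t with
  | TVar n => v n
  | TMeet t1 t2 => eval v t1 `&` eval v t2
  | TJoin t1 t2 => eval v t1 `|` eval v t2
  | TCompl t1 => ~` eval v t1
  | TBot => \bot
  | TTop => \top
  | TInt t1 => ia_g (eval v t1)
  end.

Definition in_variety (E : term -> term -> Prop) (A : interior_algebra) : Prop :=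
  forall t1 t2, E t1 t2 -> forall v : nat -> A, eval v t1 = eval v t2.

Definition projective_in (E : term -> term -> Prop) (B : interior_algebra) : Prop :=
  in_variety E B /\
  forall (A C : interior_algebra), in_variety E A -> in_variety E C ->
  forall (f : A -> C) (k : B -> C), ia_hom f -> surjective f -> ia_hom k ->
  exists h : B -> A, ia_hom h /\ forall x, f (h x) = k x.

Definition opens (A : interior_algebra) := {x : A | ia_g x == x}.

Section Opens.
Variable A : interior_algebra.

Lemma ia_g_mono (x y : A) : x <= y -> ia_g x <= ia_g y.
Proof. by move=> /meet_l <-; rewrite ia_gM leIr. Qed.

Lemma open_meet (a b : opens A) : ia_g (val a `&` val b) == val a `&` val b.
Proof. by case: a b => a /eqP Ha [b /eqP Hb] /=; rewrite ia_gM Ha Hb. Qed.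

Lemma open_join (a b : opens A) : ia_g (val a `|` val b) == val a `|` val b.
Proof.
case: a b => a /eqP Ha [b /eqP Hb] /=; rewrite eq_le ia_gle /= leUx.
by rewrite -{1}Ha -{2}Hb !ia_g_mono ?leUl ?leUr.
Qed.

Lemma open_bot : ia_g (\bot : A) == \bot.
Proof. by rewrite eq_le ia_gle le0x. Qed.

Lemma open_top : ia_g (\top : A) == \top.
Proof. by rewrite ia_g1. Qed.

Lemma open_imp (a b : opens A) : ia_g (ia_g (~` val a `|` val b)) == ia_g (~` val a `|` val b).
Proof. by rewrite ia_gg. Qed.

Definition omeet (a b : opens A) : opens A := exist (fun x : A => ia_g x == x) _ (open_meet a b).
Definition ojoin (a b : opens A) : opens A := exist (fun x : A => ia_g x == x) _ (open_join a b).
Definition obot : opens A := exist (fun x : A => ia_g x == x) _ open_bot.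
Definition otop : opens A := exist (fun x : A => ia_g x == x) _ open_top.
Definition oimp (a b : opens A) : opens A := exist (fun x : A => ia_g x == x) _ (open_imp a b).
End Opens.

Definition heyting_hom (A C : interior_algebra) (f : opens A -> opens C) : Prop :=
  [/\ forall a b, f (omeet a b) = omeet (f a) (f b),
      forall a b, f (ojoin a b) = ojoin (f a) (f b),
      forall a b, f (oimp a b) = oimp (f a) (f b),
      f (obot A) = obot C & f (otop A) = otop C].

(** O restricted to V (= models of E) is full: every Heyting homomorphism
    O(A) -> O(C) is O(h) (the restriction of h to open elements) for some
    interior-algebra homomorphism h : A -> C. *)
Definition O_full_on (E : term -> term -> Prop) : Prop :=
  forall (A C : interior_algebra), in_variety E A -> in_variety E C ->
  forall f : opens A -> opens C, heyting_hom f ->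
  exists h : A -> C, ia_hom h /\ forall a : opens A, val (f a) = h (val a).

(** O(B) is projective in gamma(V) = { O(A) : A in V }. *)
Definition O_projective_in_gamma (E : term -> term -> Prop) (B : interior_algebra) : Prop :=
  in_variety E B /\
  forall (A C : interior_algebra), in_variety E A -> in_variety E C ->
  forall (f : opens A -> opens C) (k : opens B -> opens C),
  heyting_hom f -> surjective f -> heyting_hom k ->
  exists h : opens B -> opens A, heyting_hom h /\ forall x, f (h x) = k x.

(* By fullness, f = O(F) for a homomorphism F : A -> C.  F need not be onto,
   but its image D is a subalgebra of C, hence lies in V, and F corestricts to
   an onto homomorphism A -> D.  Since f is onto, k takes its values in O(D);
   by fullness this corestriction of k is O(K) for some K : B -> D, and
   projectivity of B lifts K to H : B -> A.  Then f o O(H) = O(F o H) = O(K) = k. *)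

From HB Require Import structures.
From mathcomp Require Import all_boot all_order.
From mathcomp Require Import boolp.
Set Implicit Arguments. Unset Strict Implicit. Unset Printing Implicit Defensive.
Import Order.Theory.
Local Open Scope order_scope.

Lemma eval_hom (A C : interior_algebra) (h : A -> C) (v : nat -> A) (t : term) :
  ia_hom h -> h (eval v t) = eval (h \o v) t.
Proof.
case=> hI hU hC [h0 h1] hg.
by elim: t => //= [t1 <- t2 <- | t1 <- t2 <- | t1 <- | t1 <-].
Qed.

Lemma in_variety_inj (E : term -> term -> Prop) (D C : interior_algebra)
    (j : D -> C) :
  ia_hom j -> injective j -> in_variety E C -> in_variety E D.
Proof.
by move=> hj jinj CV t1 t2 Et v; apply: jinj; rewrite !eval_hom //; apply: CV.
Qed.

Section Subalgebra.
Variables (C : interior_algebra) (S : pred C).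
Hypotheses (SI : meet_closed S) (SU : join_closed S)
  (S0 : \bot \in S) (S1 : \top \in S)
  (SC : {in S, forall x, ~` x \in S}) (Sg : {in S, forall x, ia_g x \in S}).

Definition subalg_car := {x : C | S x}.
HB.instance Definition _ := SubChoice.on subalg_car.
HB.instance Definition _ :=
  @Order.SubChoice_isTBSubLattice.Build _ C S (ia_disp C) subalg_car SI SU S0 S1.

Fact subalg_meetUl : @left_distributive subalg_car _ Order.meet Order.join.
Proof. by move=> x y z; apply: val_inj; rewrite /= meetUl. Qed.
HB.instance Definition _ :=
  Order.Lattice_Meet_isDistrLattice.Build _ subalg_car subalg_meetUl.

Definition subalg_compl (x : subalg_car) : subalg_car :=
  Sub (~` val x) (SC (valP x)).
Fact subalg_joinxC (x : subalg_car) : x `|` subalg_compl x = \top.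
Proof. by apply: val_inj; rewrite /= joinxC. Qed.
Fact subalg_meetxC (x : subalg_car) : x `&` subalg_compl x = \bot.
Proof. by apply: val_inj; rewrite /= meetxC. Qed.
HB.instance Definition _ :=
  Order.TBDistrLattice_hasComplement.Build _ subalg_car subalg_joinxC subalg_meetxC.

Definition subalg_g (x : subalg_car) : subalg_car :=
  Sub (ia_g (val x)) (Sg (valP x)).

Fact subalg_g1 : subalg_g \top = \top.
Proof. by apply: val_inj; rewrite /= ia_g1. Qed.
Fact subalg_gM x y : subalg_g (x `&` y) = subalg_g x `&` subalg_g y.
Proof. by apply: val_inj; rewrite /= ia_gM. Qed.
Fact subalg_gle x : subalg_g x <= x.
Proof. exact: ia_gle. Qed.
Fact subalg_gg x : subalg_g (subalg_g x) = subalg_g x.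
Proof. by apply: val_inj; rewrite /= ia_gg. Qed.

Definition subalgebra : interior_algebra :=
  IAlg subalg_g1 subalg_gM subalg_gle subalg_gg.

Lemma ia_hom_subalg_val : ia_hom (val : subalgebra -> C).
Proof. by []. Qed.

Lemma subalg_val_inj : injective (val : subalgebra -> C).
Proof. exact: val_inj. Qed.

Lemma in_variety_subalgebra E : in_variety E C -> in_variety E subalgebra.
Proof. exact: in_variety_inj ia_hom_subalg_val subalg_val_inj. Qed.

End Subalgebra.

Section Image.
Variables (A C : interior_algebra) (F : A -> C).
Hypothesis homF : ia_hom F.

Definition in_image : pred C := fun c => `[< exists a, F a = c >].

Lemma in_imageP c : reflect (exists a, F a = c) (c \in in_image).
Proof. exact: asboolP. Qed.

Lemma in_image_hom a : F a \in in_image.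
Proof. by apply/in_imageP; exists a. Qed.

Lemma in_imageI : meet_closed in_image.
Proof.
case: homF => hI _ _ _ _.
by move=> _ _ /in_imageP[a <-] /in_imageP[b <-]; rewrite -hI in_image_hom.
Qed.

Lemma in_imageU : join_closed in_image.
Proof.
case: homF => _ hU _ _ _.
by move=> _ _ /in_imageP[a <-] /in_imageP[b <-]; rewrite -hU in_image_hom.
Qed.

Lemma in_image0 : \bot \in in_image.
Proof. by case: homF => _ _ _ [<- _] _; apply: in_image_hom. Qed.

Lemma in_image1 : \top \in in_image.
Proof. by case: homF => _ _ _ [_ <-] _; apply: in_image_hom. Qed.

Lemma in_imageC : {in in_image, forall c, ~` c \in in_image}.
Proof.
by case: homF => _ _ hC _ _ _ /in_imageP[a <-]; rewrite -hC in_image_hom.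
Qed.

Lemma in_image_g : {in in_image, forall c, ia_g c \in in_image}.
Proof.
by case: homF => _ _ _ _ hg _ /in_imageP[a <-]; rewrite -hg in_image_hom.
Qed.

Definition image_ia : interior_algebra :=
  subalgebra in_imageI in_imageU in_image0 in_image1 in_imageC in_image_g.

Definition corestr (a : A) : image_ia := Sub (F a) (in_image_hom a).

Lemma ia_hom_corestr : ia_hom corestr.
Proof.
case: homF => hI hU hC [h0 h1] hg.
by split; try split; move=> *; apply: val_inj; rewrite /= ?hI ?hU ?hC ?h0 ?h1 ?hg.
Qed.

Lemma corestr_surj : surjective corestr.
Proof. by case=> c cF; have [a Fa] := in_imageP _ cF; exists a; apply: val_inj. Qed.

End Image.

Section OpensMap.
Variables (A C : interior_algebra) (h : A -> C).
Hypothesis homh : ia_hom h.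

Lemma hom_val_open (a : opens A) : ia_g (h (val a)) == h (val a).
Proof. by case: homh => _ _ _ _ <-; rewrite (eqP (valP a)). Qed.

Definition opens_map (a : opens A) : opens C := exist _ (h (val a)) (hom_val_open a).

Lemma heyting_hom_opens_map : heyting_hom opens_map.
Proof.
case: homh => hI hU hC [h0 h1] hg.
by split=> *; apply: val_inj; rewrite /= ?hg ?hI ?hU ?hC ?h0 ?h1.
Qed.

Lemma opens_map_inj : injective h -> injective opens_map.
Proof. by move=> hinj a b /(congr1 val) /hinj /val_inj. Qed.

End OpensMap.

Lemma heyting_hom_cancel (B D C : interior_algebra) (m : opens D -> opens C)
    (g : opens B -> opens D) (k : opens B -> opens C) :
  injective m -> heyting_hom m -> heyting_hom k -> (forall x, m (g x) = k x) ->
  heyting_hom g.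
Proof.
move=> minj [mI mU mimp m0 m1] [kI kU kimp k0 k1] mgk.
by split=> *; apply: minj; rewrite ?mI ?mU ?mimp ?m0 ?m1 !mgk ?kI ?kU ?kimp ?k0 ?k1.
Qed.

Lemma heyting_hom_lift (B D C : interior_algebra) (j : D -> C) (homj : ia_hom j)
    (k : opens B -> opens C) :
  injective j -> heyting_hom k -> (forall x, exists d, j d = val (k x)) ->
  exists k' : opens B -> opens D,
    heyting_hom k' /\ forall x, opens_map homj (k' x) = k x.
Proof.
move=> jinj homk kj.
pose pre x := projT1 (cid (kj x)).
have jpre x : j (pre x) = val (k x) := projT2 (cid (kj x)).
have pre_open x : ia_g (pre x) == pre x.
  by apply/eqP/jinj; case: homj => _ _ _ _ ->; rewrite jpre (eqP (valP (k x))).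
pose k' x : opens D := exist (fun d : D => ia_g d == d) _ (pre_open x).
have k'E x : opens_map homj (k' x) = k x by apply: val_inj; rewrite /= jpre.
exists k'; split=> //.
exact: heyting_hom_cancel (opens_map_inj jinj) (heyting_hom_opens_map homj) homk k'E.
Qed.

Theorem lemma5p12 (E : term -> term -> Prop) (B : interior_algebra) :
  O_full_on E -> projective_in E B -> O_projective_in_gamma E B.
Proof.
move=> full [BV projB]; split=> // A C AV CV f k homf f_surj homk.
have [F [homF fF]] := full A C AV CV f homf.
pose D := image_ia homF.
have DV : in_variety E D by apply: in_variety_subalgebra.
have homj : ia_hom (val : D -> C) by apply: ia_hom_subalg_val.
have j_inj : injective (val : D -> C) by apply: subalg_val_inj.
have k_in_image x : exists d : D, val d = val (k x).
  have [a <-] := f_surj (k x).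
  by exists (corestr homF (val a)); rewrite fF.
have [k' [homk' k'E]] := heyting_hom_lift homj j_inj homk k_in_image.
have [K [homK KE]] := full B D BV DV k' homk'.
have [H [homH HE]] :=
  projB A D AV DV _ K (ia_hom_corestr homF) (@corestr_surj _ _ _ homF) homK.
exists (opens_map homH); split; first exact: heyting_hom_opens_map.
move=> x; apply: val_inj; rewrite fF /=.
by rewrite -[F _]/(val (corestr homF _)) HE -KE -k'E.
Qed.
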